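(* Let $n\geq 2$, $p\geq n+2$, and $$\Omega=\{(x',x_n)\in\mathbb R^{n-1}\times\mathbb R: |x'|<1,\ 0<x_n<\sqrt{1-|x'|^2}\}.$$ Then there is a constant $C>0$ depending only on $n,p$ such that the function $$w(x',x_n)=Cx_n-Cx_n^{\frac{2}{n+p}}(1-|x'|^2)^{\frac{n+p-2}{2(n+p)}}$$ is smooth and convex in $\Omega$ and satisfies $\det D^2 w\leq |w|^{-p}$ in $\Omega$ and $w=0$ on $\partial\Omega$. *)

From HB Require Import structures.
From mathcomp Require Import all_boot all_order all_algebra.
From mathcomp Require Import all_classical all_reals all_analysis.
Set Implicit Arguments. Unset Strict Implicit. Unset Printing Implicit Defensive.
Import Order.TTheory GRing.Theory Num.Theory.
Import numFieldNormedType.Exports.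
Local Open Scope classical_set_scope.
Local Open Scope ring_scope.

(* Points of R^{n-1} x R are row vectors of length (n-1)+1;
   x' = lsubmx x, x_n = rsubmx x 0 0. *)
Section Defs.
Variable R : realType.

Definition xprime (n : nat) (x : 'rV[R]_(n.-1 + 1)) : 'rV[R]_(n.-1) := lsubmx x.
Definition xlast (n : nat) (x : 'rV[R]_(n.-1 + 1)) : R := rsubmx x 0 0.

Definition sqnorm (m : nat) (y : 'rV[R]_m) : R := \sum_(i < m) y 0 i ^+ 2.

Definition Omega (n : nat) : set 'rV[R]_(n.-1 + 1) :=
  [set x | sqnorm (xprime x) < 1 /\ 0 < xlast x /\
           xlast x < Num.sqrt (1 - sqnorm (xprime x))].

Definition wfun (n : nat) (p C : R) (x : 'rV[R]_(n.-1 + 1)) : R :=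
  C * xlast x
  - C * powR (xlast x) (2 / (n%:R + p))
      * powR (1 - sqnorm (xprime x)) ((n%:R + p - 2) / (2 * (n%:R + p))).

Fixpoint iterD (m : nat) (vs : seq 'rV[R]_m) (f : 'rV[R]_m -> R) : 'rV[R]_m -> R :=
  match vs with
  | [::] => f
  | v :: vs' => 'D_v (iterD vs' f)
  end.

Definition smooth_on (m : nat) (A : set 'rV[R]_m) (f : 'rV[R]_m -> R) : Prop :=
  forall (vs : seq 'rV[R]_m) (x : 'rV[R]_m), A x -> differentiable (iterD vs f) x.

Definition convex_on (m : nat) (A : set 'rV[R]_m) (f : 'rV[R]_m -> R) : Prop :=
  forall x y : 'rV[R]_m, A x -> A y -> forall t : R, 0 <= t <= 1 ->
    f ((1 - t) *: x + t *: y) <= (1 - t) * f x + t * f y.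

Definition hessian (m : nat) (f : 'rV[R]_m -> R) (x : 'rV[R]_m) : 'M[R]_m :=
  \matrix_(i < m, j < m) 'D_(delta_mx 0 i) ('D_(delta_mx 0 j) f) x.

End Defs.

From Pilot Require Import Defs.
From HB Require Import structures.
From mathcomp Require Import all_boot all_order all_algebra.
From mathcomp Require Import all_classical all_reals all_analysis.
From mathcomp Require Import ring lra.
Set Implicit Arguments. Unset Strict Implicit. Unset Printing Implicit Defensive.
Import Order.TTheory GRing.Theory Num.Theory.
Import numFieldNormedType.Exports.
Local Open Scope classical_set_scope.
Local Open Scope ring_scope.

(* Write t = x_n, rho = 1 - |x'|^2, alpha = 2/(n+p) and beta = (n+p-2)/(2(n+p)),
   so that alpha + 2 beta = 1 and, with C = 1, w = t - G for G = t^alpha rho^beta.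
   G = t^alpha (sqrt rho)^(2 beta) is a weighted geometric mean of t and of the
   concave function sqrt rho, hence concave, and w is convex; G = t exactly when
   t^2 = rho, so w vanishes on the boundary of Omega.  The Hessian of w is the
   arrow matrix [[lam I + mu x'^T x', c x'^T]; [c x', d]], whose determinant is
   alpha (2 beta)^n G^n / (t^2 rho^n).  As G^(n+p) = t^2 rho^((n+p-2)/2) <= t^2 rho^n
   (because rho <= 1 and p >= n+2) and |w| = G - t <= G, this is at most
   alpha (2 beta)^n |w|^(-p) <= |w|^(-p).  Smoothness holds because w is built from
   coordinates by sums, products and real powers of positive quantities, a class of
   expressions that is closed under directional differentiation. *)

Section DerivativeFacts.
Variable R : realType.

Lemma near_eq_differentiable (V W : normedModType R) (f g : V -> W) (x : V) :
  (\forall y \near x, f y = g y) -> differentiable f x -> differentiable g x.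
Proof.
move=> fg df; have fgx : f x = g x := nbhs_singleton fg.
have dg : g \o shift x = cst (g x) + 'd f x +o_ 0 id.
  apply/eqaddoP => e e0; have /eqaddoP/(_ e e0) := diff_locally df.
  have : \forall h \near (0 : V), f (h + x) = g (h + x).
    by move: fg; rewrite (near_shift 0) /=; apply: filterS => h; rewrite subr0.
  by apply: filterS2 => h fgh; rewrite !fctE /= fgh -fgx.
have dgE : 'd g x = 'd f x :> (V -> W) := diff_unique (diff_continuous df) dg.
by apply/diff_locallyP; rewrite dgE; split => //; exact: diff_continuous.
Qed.

Lemma derive_comp_real (V : normedModType R) (f : V -> R) (g : R -> R) (x v : V) :
  differentiable f x -> differentiable g (f x) ->
  'D_v (g \o f) x = 'D_v f x * g^`()%classic (f x).
Proof.
move=> df dg; rewrite deriveE; last exact: differentiable_comp.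
by rewrite diff_comp // /= diff1E // -deriveE.
Qed.

Lemma differentiable_powR (a y : R) :
  0 < y -> differentiable (fun z : R^o => powR z a : R^o) y.
Proof.
by move=> y0; apply/derivable1_diffP; apply: derivable_powR; rewrite in_itv /= y0.
Qed.

Lemma derive_coord (k : nat) (x v : 'rV[R]_k) (i : 'I_k) :
  'D_v (fun y : 'rV[R]_k => y 0 i) x = v 0 i.
Proof.
have := @derive_mx R _ 1 k id x v (@derivable_id _ _ x v).
by rewrite derive_id => /(congr1 (fun M : 'rV[R]_k => M 0 i)); rewrite mxE.
Qed.

End DerivativeFacts.

Section Terms.
Variables (R : realType) (k : nat).
Local Notation V := 'rV[R]_k.

Inductive term :=
| Cst of R
| Coord of 'I_k
| Add of term & term
| Mul of term & term
| Pow of term & R.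

Fixpoint eval (e : term) (x : V) : R :=
  match e with
  | Cst c => c
  | Coord i => x 0 i
  | Add e1 e2 => eval e1 x + eval e2 x
  | Mul e1 e2 => eval e1 x * eval e2 x
  | Pow e1 a => powR (eval e1 x) a
  end.

Fixpoint dterm (v : V) (e : term) : term :=
  match e with
  | Cst _ => Cst 0
  | Coord i => Cst (v 0 i)
  | Add e1 e2 => Add (dterm v e1) (dterm v e2)
  | Mul e1 e2 => Add (Mul (dterm v e1) e2) (Mul e1 (dterm v e2))
  | Pow e1 a => Mul (Mul (Cst a) (Pow e1 (a - 1))) (dterm v e1)
  end.

Fixpoint pow_bases_gt0 (e : term) (x : V) : Prop :=
  match e with
  | Cst _ | Coord _ => True
  | Add e1 e2 | Mul e1 e2 => pow_bases_gt0 e1 x /\ pow_bases_gt0 e2 x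
  | Pow e1 _ => 0 < eval e1 x /\ pow_bases_gt0 e1 x
  end.

Definition sum_term (I : Type) (s : seq I) (f : I -> term) : term :=
  foldr (fun i e => Add (f i) e) (Cst 0) s.

Lemma eval_sum_term (I : Type) (s : seq I) (f : I -> term) (x : V) :
  eval (sum_term s f) x = \sum_(i <- s) eval (f i) x.
Proof. by elim: s => [|i s IHs]; rewrite ?big_nil ?big_cons //= IHs. Qed.

Lemma dterm_sum_term (I : Type) (s : seq I) (f : I -> term) (v : V) :
  dterm v (sum_term s f) = sum_term s (dterm v \o f).
Proof. by elim: s => //= i s ->. Qed.

Lemma pow_bases_gt0_sum_term (I : Type) (s : seq I) (f : I -> term) (x : V) :
  (forall i, pow_bases_gt0 (f i) x) -> pow_bases_gt0 (sum_term s f) x.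
Proof. by move=> fx; elim: s => //= i s; split. Qed.

Lemma pow_bases_gt0_dterm (v : V) (e : term) (x : V) :
  pow_bases_gt0 e x -> pow_bases_gt0 (dterm v e) x.
Proof.
elim: e => [c|i|e1 IH1 e2 IH2|e1 IH1 e2 IH2|e1 IH1 a] //=.
- by move=> [/IH1 ? /IH2 ?].
- by move=> [e1x e2x]; split; split => //; [exact: IH1 | exact: IH2].
- by move=> [e1x pe1]; split; [|exact: IH1].
Qed.

Lemma pow_bases_gt0_dterms (vs : seq V) (e : term) (x : V) :
  pow_bases_gt0 e x -> pow_bases_gt0 (foldr dterm e vs) x.
Proof. by move=> ex; elim: vs => //= v vs; exact: pow_bases_gt0_dterm. Qed.

Lemma differentiable_eval (e : term) (x : V) :
  pow_bases_gt0 e x -> differentiable (eval e) x.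
Proof.
elim: e => [c|i|e1 IH1 e2 IH2|e1 IH1 e2 IH2|e1 IH1 a] /=.
- by move=> _; exact: differentiable_cst.
- by move=> _; exact: differentiable_coord.
- by move=> [/IH1 ? /IH2 ?]; exact: differentiableD.
- by move=> [/IH1 ? /IH2 ?]; exact: differentiableM.
- move=> [e1x /IH1 d1].
  exact: (differentiable_comp d1 (differentiable_powR a e1x)).
Qed.

Lemma derive_eval (v : V) (e : term) (x : V) :
  pow_bases_gt0 e x -> 'D_v (eval e) x = eval (dterm v e) x.
Proof.
elim: e => [c|i|e1 IH1 e2 IH2|e1 IH1 e2 IH2|e1 IH1 a] /= ex.
- exact: derive_cst.
- exact: derive_coord.
- have [e1x e2x] := ex.
  by rewrite deriveD ?IH1 ?IH2 //; exact/diff_derivable/differentiable_eval.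
- have [e1x e2x] := ex.
  rewrite deriveM ?IH1 ?IH2 //; try exact/diff_derivable/differentiable_eval.
  by rewrite /GRing.scale /= addrC mulrC [eval e1 x * _]mulrC.
- have [e1x pe1] := ex.
  rewrite (derive_comp_real _ (differentiable_eval pe1) (differentiable_powR a e1x)).
  by rewrite IH1 // powR_derive1 ?in_itv /= ?e1x // mulrC.
Qed.

Lemma near_pow_bases_gt0 (e : term) (x : V) :
  pow_bases_gt0 e x -> \forall y \near x, pow_bases_gt0 e y.
Proof.
elim: e => [c|i|e1 IH1 e2 IH2|e1 IH1 e2 IH2|e1 IH1 a] /=; try by move=> _; exact: filterE.
- by move=> [/IH1 n1 /IH2 n2]; apply: filterS2 n1 n2 => y.
- by move=> [/IH1 n1 /IH2 n2]; apply: filterS2 n1 n2 => y.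
- move=> [e1x pe1].
  have n0 : \forall y \near x, 0 < eval e1 y :=
    cvgr_gt _ (differentiable_continuous (differentiable_eval pe1)) _ e1x.
  by near=> y; split; near: y; [exact: n0 | exact: IH1].
Unshelve. all: by end_near. Qed.

Lemma iterD_eval (vs : seq V) (e : term) (x : V) :
  pow_bases_gt0 e x -> Defs.iterD vs (eval e) x = eval (foldr dterm e vs) x.
Proof.
elim: vs x => [|v vs IHvs] x ex //=.
rewrite -derive_eval; last exact: pow_bases_gt0_dterms.
by apply: near_eq_derive; apply: filterS (near_pow_bases_gt0 ex) => y; exact: IHvs.
Qed.

Lemma smooth_on_eval (A : set V) (e : term) :
  (forall x, A x -> pow_bases_gt0 e x) -> smooth_on A (eval e).
Proof.
move=> Ae vs x /Ae ex; apply: (near_eq_differentiable (f := eval (foldr dterm e vs))).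
  by apply: filterS (near_pow_bases_gt0 ex) => y ey; rewrite iterD_eval.
exact/differentiable_eval/pow_bases_gt0_dterms.
Qed.

End Terms.

Arguments Cst {R k}.
Arguments Coord {R k}.
Arguments Add {R k}.
Arguments Mul {R k}.
Arguments Pow {R k}.

Section ArrowDeterminant.
Variable F : fieldType.

Lemma det_add1_rank1 (m : nat) (u v : 'rV[F]_m) :
  \det (1%:M + u^T *m v) = 1 + (v *m u^T) 0 0.
Proof.
pose N := block_mx (1%:M : 'M[F]_m) (- u^T) v (1%:M : 'M[F]_1).
have NuE : block_mx 1%:M u^T 0 1%:M *m N = block_mx (1%:M + u^T *m v) 0 v 1%:M.
  by rewrite mulmx_block !mul1mx !mulmx1 !mul0mx !add0r addNr.
have NlE : block_mx 1%:M 0 (- v) 1%:M *m N = block_mx 1%:M (- u^T) 0 (1%:M + v *m u^T).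
  by rewrite mulmx_block !mul1mx !mulmx1 !mul0mx !addr0 mulNmx mulmxN opprK addNr addrC.
have := congr1 determinant NuE.
rewrite det_mulmx det_ublock det_lblock !det1 !mul1r mulr1 => <-.
have := congr1 determinant NlE.
rewrite det_mulmx det_ublock det_lblock !det1 !mul1r => ->.
by rewrite det_mx11 !mxE.
Qed.

Lemma det_arrow_block (m : nat) (lam mu c d : F) (y : 'rV[F]_m) : lam != 0 -> d != 0 ->
  \det (block_mx (lam%:M + mu *: (y^T *m y)) (c *: y^T) (c *: y) d%:M)
  = lam ^+ m * (d + (d * mu - c ^+ 2) / lam * (y *m y^T) 0 0).
Proof.
move=> lam0 d0; pose kap := (mu - c ^+ 2 / d) / lam.
have trZ : (kap *: y)^T = kap *: y^T by apply/matrixP => i j; rewrite !mxE.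
pose K := block_mx (1%:M : 'M[F]_m) (- (c / d) *: y^T) 0 (1%:M : 'M[F]_1).
have KE : K *m block_mx (lam%:M + mu *: (y^T *m y)) (c *: y^T) (c *: y) d%:M
   = block_mx (lam *: (1%:M + (kap *: y)^T *m y)) 0 (c *: y) d%:M.
  rewrite mulmx_block !mul1mx !mul0mx !add0r; congr block_mx.
  - rewrite trZ -!scalemxAl -scalemxAr !scalerA scalerDr scalemx1 scalerA.
    rewrite -addrA -scalerDl; congr (_ + _ *: _).
    by rewrite /kap; field; apply/andP.
  - rewrite mul_mx_scalar scalerA -scalerDl.
    suff -> : c + d * - (c / d) = 0 by rewrite scale0r.
    by field.
have := congr1 determinant KE.
rewrite det_mulmx det_ublock det_lblock !det1 !mul1r detZ det_add1_rank1 det_scalar1 => ->.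
by rewrite trZ -scalemxAr mxE /kap; field; apply/andP.
Qed.

End ArrowDeterminant.

Section PowRFacts.
Variable R : realType.

Lemma powR_subr1 (t a : R) : 0 < t -> powR t (a - 1) = powR t a / t.
Proof. by move=> t0; rewrite powRB ?powRr1 ?ltW //; apply/implyP => _; rewrite gt_eqF. Qed.

Lemma am_gm_powR (a c u v : R) : 0 < a -> 0 < c -> a + c = 1 -> 0 <= u -> 0 <= v ->
  powR u a * powR v c <= a * u + c * v.
Proof.
move=> a0 c0 ac u0 v0.
have invK : a^-1^-1 + c^-1^-1 = 1 by rewrite !invrK.
have powRK (e x : R) : 0 < e -> 0 <= x -> powR (powR x e) e^-1 / e^-1 = e * x.
  by move=> e0 x0; rewrite -powRrM mulfV ?gt_eqF // powRr1 // invrK mulrC.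
have := @conjugate_powR R (powR u a) (powR v c) a^-1 c^-1 (powR_ge0 _ _) (powR_ge0 _ _).
by rewrite !invr_gt0 !powRK // => /(_ a0 c0 invK).
Qed.

Lemma powR_mul_concave (a c l t1 t2 s1 s2 : R) : 0 < a -> 0 < c -> a + c = 1 ->
  0 <= l <= 1 -> 0 < t1 -> 0 < t2 -> 0 < s1 -> 0 < s2 ->
  (1 - l) * (powR t1 a * powR s1 c) + l * (powR t2 a * powR s2 c)
  <= powR ((1 - l) * t1 + l * t2) a * powR ((1 - l) * s1 + l * s2) c.
Proof.
move=> a0 c0 ac /andP[l0 l1] t10 t20 s10 s20.
set T := (1 - l) * t1 + l * t2; set S := (1 - l) * s1 + l * s2.
have T0 : 0 < T by rewrite /T; nra.
have S0 : 0 < S by rewrite /S; nra.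
have scaled (t s : R) : 0 < t -> 0 < s ->
    powR t a * powR s c <= powR T a * powR S c * (a * (t / T) + c * (s / S)).
  move=> t0 s0.
  have split_pow (z Z e : R) : 0 < z -> 0 < Z -> powR z e = powR Z e * powR (z / Z) e.
    by move=> z0 Z0; rewrite -powRM ?divr_ge0 ?ltW // mulrC divfK // gt_eqF.
  rewrite (split_pow t T) // (split_pow s S) // mulrACA.
  apply: ler_wpM2l; first by rewrite mulr_ge0 ?powR_ge0.
  by apply: am_gm_powR; rewrite ?divr_ge0 ?ltW.
have l0' : 0 <= 1 - l by rewrite subr_ge0.
apply: le_trans (lerD (ler_wpM2l l0' (scaled _ _ t10 s10)) (ler_wpM2l l0 (scaled _ _ t20 s20))) _.
set P := powR T a * powR S c.
have -> : (1 - l) * (P * (a * (t1 / T) + c * (s1 / S))) + l * (P * (a * (t2 / T) + c * (s2 / S)))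
    = P * (a * (((1 - l) * t1 + l * t2) / T) + c * (((1 - l) * s1 + l * s2) / S)) by ring.
by rewrite -/T -/S !divff ?gt_eqF // !mulr1 ac mulr1.
Qed.

End PowRFacts.

Section Barrier.
Variables (R : realType) (n : nat) (p : R).
Hypotheses (n_ge2 : (2 <= n)%N) (p_ge : n%:R + 2 <= p).
Local Notation m := n.-1.
Local Notation V := 'rV[R]_(m + 1).
Local Notation w := (@wfun R n p 1).

Definition alpha : R := 2 / (n%:R + p).
Definition beta : R := (n%:R + p - 2) / (2 * (n%:R + p)).
Definition rho (x : V) : R := 1 - sqnorm (xprime x).
Definition geomean (x : V) : R := powR (xlast x) alpha * powR (rho x) beta.

Lemma wfunE (x : V) : w x = xlast x - geomean x.
Proof. by rewrite /wfun !mul1r. Qed.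

Let np_gt0 : 0 < n%:R + p.
Proof. have := p_ge; have : 0 <= n%:R :> R by rewrite ler0n. lra. Qed.

Lemma alpha_gt0 : 0 < alpha.
Proof. by rewrite divr_gt0. Qed.

Lemma beta_gt0 : 0 < beta.
Proof.
have n2 : 2 <= n%:R :> R by rewrite (ler_nat R 2 n).
by rewrite divr_gt0 ?mulr_gt0 //; have := p_ge; lra.
Qed.

Lemma alpha_add_2beta : alpha + 2 * beta = 1.
Proof. by rewrite /alpha /beta; field; rewrite gt_eqF. Qed.

Lemma rho_le1 (x : V) : rho x <= 1.
Proof. by rewrite lerBlDr lerDl sumr_ge0 // => i _; exact: sqr_ge0. Qed.

Lemma OmegaE (x : V) : Omega x <-> 0 < xlast x /\ xlast x ^+ 2 < rho x.
Proof.
rewrite /Omega /= -/(rho x).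
split=> [[x'_lt1 [t0 t_lt]] | [t0 t_lt]].
  have rho0 : 0 <= rho x by rewrite subr_ge0 ltW.
  by split=> //; rewrite -(sqr_sqrtr rho0) ltr_sqr // ?nnegrE ?sqrtr_ge0 ?ltW.
have rho_gt0 : 0 < rho x by apply: le_lt_trans t_lt; exact: sqr_ge0.
split; first by rewrite -subr_gt0.
by split=> //; rewrite -ltr_sqr ?nnegrE ?sqrtr_ge0 ?ltW // sqr_sqrtr ?ltW.
Qed.

Lemma rho_gt0 (x : V) : Omega x -> 0 < rho x.
Proof. by move=> /OmegaE[_ t_lt]; apply: le_lt_trans t_lt; exact: sqr_ge0. Qed.

Local Notation ilast := (rshift m ord0).

Lemma xlastE (x : V) : xlast x = x 0 ilast.
Proof. by rewrite /xlast mxE. Qed.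

(* Locked so that [simpl] keeps it folded in [eval] and [dterm] of [w_term]. *)
Definition rho_term : term R (m + 1) := locked
  (Add (Cst 1) (Mul (Cst (-1)) (sum_term (index_enum 'I_m)
    (fun i => Mul (Coord (lshift 1 i)) (Coord (lshift 1 i)))))).

Definition w_term : term R (m + 1) :=
  Add (Coord ilast) (Mul (Cst (-1)) (Mul (Pow (Coord ilast) alpha) (Pow rho_term beta))).

Lemma eval_rho_term (x : V) : eval rho_term x = rho x.
Proof.
rewrite /rho_term -lock /= eval_sum_term mulN1r /rho /sqnorm; congr (_ - _).
by apply: eq_bigr => i _; rewrite mxE.
Qed.

Lemma eval_w_term : eval w_term = w.
Proof. by apply/funext => x; rewrite wfunE /= eval_rho_term -xlastE mulN1r. Qed.

Lemma pow_bases_gt0_rho_term (x : V) : pow_bases_gt0 rho_term x.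
Proof. by rewrite /rho_term -lock; do 2 split => //; apply: pow_bases_gt0_sum_term. Qed.

Lemma pow_bases_gt0_w_term (x : V) : Omega x -> pow_bases_gt0 w_term x.
Proof.
move=> Ox; have /OmegaE[t0 _] := Ox; rewrite /= -xlastE eval_rho_term.
by do !split => //; [exact: rho_gt0 | exact: pow_bases_gt0_rho_term].
Qed.

Lemma smooth_on_w : smooth_on (@Omega R n) w.
Proof. by rewrite -eval_w_term; apply: smooth_on_eval; exact: pow_bases_gt0_w_term. Qed.

Lemma differentiable_xlast (x : V) : differentiable (@xlast R n) x.
Proof.
have -> : @xlast R n = fun y : V => y 0 ilast by apply/funext => y; rewrite xlastE.
exact: differentiable_coord.
Qed.

Lemma differentiable_rho (x : V) : differentiable rho x.
Proof.
have -> : rho = eval rho_term by apply/funext => y; rewrite eval_rho_term.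
exact/differentiable_eval/pow_bases_gt0_rho_term.
Qed.

Lemma continuous_rho_subX (x : V) : {for x, continuous (fun y => rho y - xlast y ^+ 2)}.
Proof.
apply/differentiable_continuous/differentiableB; first exact: differentiable_rho.
exact: (@differentiableX _ _ (@xlast R n) 1 x (differentiable_xlast x)).
Qed.

Lemma open_Omega : open (@Omega R n).
Proof.
have -> : @Omega R n = @xlast R n @^-1` [set y | 0 < y] `&`
    (fun x => rho x - xlast x ^+ 2) @^-1` [set y | 0 < y].
  by apply/seteqP; split => x /=; rewrite OmegaE subr_gt0.
apply: openI; apply: open_comp; try exact: open_gt.
- by move=> x _; exact/differentiable_continuous/differentiable_xlast.
- by move=> x _; exact: continuous_rho_subX.
Qed.

Lemma closure_Omega (x : V) :
  closure (@Omega R n) x -> 0 <= xlast x /\ xlast x ^+ 2 <= rho x.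
Proof.
pose F := @xlast R n @^-1` [set y | 0 <= y] `&`
  (fun x => rho x - xlast x ^+ 2) @^-1` [set y | 0 <= y].
have closedF : closed F.
  apply: closedI; apply: preimage_closed; try exact: closed_ge.
  - by move=> y _; exact/differentiable_continuous/differentiable_xlast.
  - by move=> y _; exact: continuous_rho_subX.
have OmegaF : @Omega R n `<=` F.
  by move=> y /OmegaE[t0 t_lt]; split => /=; rewrite ?subr_ge0 ltW.
by move=> /(closureS OmegaF); rewrite -(closure_id F).1 // => -[/= ->]; rewrite subr_ge0.
Qed.

Lemma powR_alpha_sqr_beta (t : R) : 0 <= t -> powR t alpha * powR (t ^+ 2) beta = t.
Proof.
move=> t0; rewrite -(powR_mulrn 2 t0) -powRrM -powRD; last first.
  by rewrite alpha_add_2beta oner_eq0.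
by rewrite alpha_add_2beta powRr1.
Qed.

Lemma w_boundary (x : V) : (closure (@Omega R n) `\` (@Omega R n)°) x -> w x = 0.
Proof.
move=> [/closure_Omega[t0 t_le] not_int].
have not_Omega : ~ Omega x.
  by move=> Ox; apply: not_int; move: open_Omega; rewrite openE; apply.
rewrite wfunE /geomean; have [t_eq0 | t_gt0] := eqVneq (xlast x) 0.
  by rewrite t_eq0 powR0 ?mul0r ?subrr // gt_eqF // alpha_gt0.
have rhoE : rho x = xlast x ^+ 2.
  apply/eqP; rewrite eq_le t_le andbT leNgt; apply/negP => t_lt.
  by apply: not_Omega; apply/OmegaE; rewrite lt_def t_gt0.
by rewrite rhoE powR_alpha_sqr_beta // subrr.
Qed.

Lemma sqr_comb_sqrt_le_rho (x y : V) (l : R) : 0 <= l <= 1 -> 0 <= rho x -> 0 <= rho y ->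
  ((1 - l) * Num.sqrt (rho x) + l * Num.sqrt (rho y)) ^+ 2 <= rho ((1 - l) *: x + l *: y).
Proof.
move=> /andP[l0 l1] rx ry.
pose X := sqnorm (xprime x); pose Y := sqnorm (xprime y).
pose P := \sum_(i < m) xprime x 0 i * xprime y 0 i.
have rhoE : rho ((1 - l) *: x + l *: y) = 1 - ((1 - l) ^+ 2 * X + l ^+ 2 * Y + 2 * l * (1 - l) * P).
  rewrite /rho /sqnorm /X /Y /P /sqnorm !mulr_sumr -!big_split /=; congr (_ - _).
  by apply: eq_bigr => i _; rewrite !mxE; ring.
have P_le : 2 * P <= X + Y.
  rewrite -subr_ge0 (_ : X + Y - 2 * P = \sum_(i < m) (xprime x 0 i - xprime y 0 i) ^+ 2).
    by apply: sumr_ge0 => i _; exact: sqr_ge0.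
  rewrite /X /Y /P /sqnorm mulr_sumr -big_split /= -sumrN -big_split /=.
  by apply: eq_bigr => i _; ring.
have sx := sqr_sqrtr rx; have sy := sqr_sqrtr ry.
rewrite rhoE; move: sx sy; rewrite /rho -/X -/Y.
set a := Num.sqrt _; set b := Num.sqrt _ => sx sy.
have : 0 <= (l * (1 - l)) * ((a - b) ^+ 2 + (X + Y - 2 * P)).
  apply: mulr_ge0; first by rewrite mulr_ge0 ?subr_ge0.
  by apply: addr_ge0; rewrite ?sqr_ge0 ?subr_ge0.
nra.
Qed.

Lemma xlast_comb (x y : V) (l : R) :
  xlast ((1 - l) *: x + l *: y) = (1 - l) * xlast x + l * xlast y.
Proof. by rewrite !xlastE !mxE. Qed.

Lemma powR_sqrt_2beta (r : R) : 0 <= r -> powR (Num.sqrt r) (2 * beta) = powR r beta.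
Proof. by move=> r0; rewrite powRrM (powR_mulrn 2 (sqrtr_ge0 r)) sqr_sqrtr. Qed.

Lemma geomean_concave (x y : V) (l : R) : Omega x -> Omega y -> 0 <= l <= 1 ->
  (1 - l) * geomean x + l * geomean y <= geomean ((1 - l) *: x + l *: y).
Proof.
move=> Ox Oy l01; have /OmegaE[tx _] := Ox; have /OmegaE[ty _] := Oy.
have rx0 := rho_gt0 Ox; have ry0 := rho_gt0 Oy.
have := sqr_comb_sqrt_le_rho l01 (ltW rx0) (ltW ry0).
set S := _ + _ => S_le.
have S0 : 0 <= S.
  by case/andP: l01 => l0 l1; rewrite addr_ge0 ?mulr_ge0 ?sqrtr_ge0 ?subr_ge0.
rewrite /geomean xlast_comb -(powR_sqrt_2beta (ltW rx0)) -(powR_sqrt_2beta (ltW ry0)).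
apply: le_trans (powR_mul_concave alpha_gt0 _ alpha_add_2beta _ _ _ _ _) _ => //.
- by rewrite mulr_gt0 ?beta_gt0.
- by rewrite sqrtr_gt0.
- by rewrite sqrtr_gt0.
apply: ler_wpM2l; first exact: powR_ge0.
rewrite -/S powRrM (powR_mulrn 2 S0); apply: ge0_ler_powR => //.
- exact/ltW/beta_gt0.
- by rewrite nnegrE sqr_ge0.
- by rewrite nnegrE (le_trans (sqr_ge0 S)).
Qed.

Lemma convex_on_w : convex_on (@Omega R n) w.
Proof.
move=> x y Ox Oy l l01; have := geomean_concave Ox Oy l01.
rewrite !wfunE xlast_comb; lra.
Qed.

Definition dotp (u v : V) : R := (xprime u *m (xprime v)^T) 0 0.

Lemma dotpE (u v : V) : dotp u v = \sum_(i < m) u 0 (lshift 1 i) * v 0 (lshift 1 i).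
Proof. by rewrite /dotp mxE; apply: eq_bigr => i _; rewrite !mxE. Qed.

Lemma eval_drho_term (v x : V) : eval (dterm v rho_term) x = -2 * dotp x v.
Proof.
rewrite /rho_term -lock /= dterm_sum_term !eval_sum_term dotpE !mulr_sumr.
rewrite big1 ?add0r // => [|i _]; last exact: mul0r.
by apply: eq_bigr => i _ /=; ring.
Qed.

Lemma eval_d2rho_term (u v x : V) : eval (dterm u (dterm v rho_term)) x = -2 * dotp u v.
Proof.
rewrite /rho_term -lock /= !dterm_sum_term !eval_sum_term dotpE !mulr_sumr.
by rewrite add0r -!big_split; apply: eq_bigr => i _ /=; ring.
Qed.

Lemma derive2_w (u v x : V) : Omega x ->
  'D_u ('D_v w) x = geomean x *
    (alpha * (1 - alpha) * xlast u * xlast v / xlast x ^+ 2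
     + 2 * alpha * beta * (xlast u * dotp x v + xlast v * dotp x u) / (xlast x * rho x)
     + 4 * beta * (1 - beta) * dotp x u * dotp x v / rho x ^+ 2
     + 2 * beta * dotp u v / rho x).
Proof.
move=> Ox; have /OmegaE[t0 _] := Ox; have rho0 := rho_gt0 Ox.
rewrite -eval_w_term -[LHS]/(Defs.iterD [:: u; v] (eval w_term) x).
rewrite iterD_eval; last exact: pow_bases_gt0_w_term.
rewrite /= !eval_drho_term eval_d2rho_term eval_rho_term -!xlastE !powR_subr1 //.
rewrite /geomean; field.
by rewrite !gt_eqF.
Qed.

Lemma xlast_delta_lshift (i : 'I_m) : xlast (delta_mx 0 (lshift 1 i) : V) = 0.
Proof. by rewrite xlastE mxE eq_rlshift andbF. Qed.

Lemma xlast_delta_ilast : xlast (delta_mx 0 ilast : V) = 1.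
Proof. by rewrite xlastE mxE !eqxx. Qed.

Lemma dotp_delta_lshift (z : V) (i : 'I_m) : dotp z (delta_mx 0 (lshift 1 i)) = z 0 (lshift 1 i).
Proof.
rewrite /dotp [xprime (delta_mx _ _)](_ : _ = delta_mx 0 i); first by rewrite trmx_delta -colE !mxE.
by apply/matrixP => a b; rewrite !mxE eq_lshift.
Qed.

Lemma dotp_delta_ilast (z : V) : dotp z (delta_mx 0 ilast) = 0.
Proof.
rewrite /dotp [xprime (delta_mx _ _)](_ : _ = 0); first by rewrite trmx0 mulmx0 mxE.
by apply/matrixP => a b; rewrite !mxE eq_lrshift andbF.
Qed.

Definition hess_lam (x : V) : R := 2 * beta * geomean x / rho x.
Definition hess_mu (x : V) : R := 4 * beta * (1 - beta) * geomean x / rho x ^+ 2.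
Definition hess_c (x : V) : R := 2 * alpha * beta * geomean x / (xlast x * rho x).
Definition hess_d (x : V) : R := alpha * (1 - alpha) * geomean x / xlast x ^+ 2.

Lemma hessian_w (x : V) : Omega x -> hessian w x =
  block_mx ((hess_lam x)%:M + hess_mu x *: ((xprime x)^T *m xprime x))
           (hess_c x *: (xprime x)^T) (hess_c x *: xprime x) (hess_d x)%:M.
Proof.
move=> Ox; have /OmegaE[t0 _] := Ox; have rho0 := rho_gt0 Ox.
apply/matrixP => i j; rewrite mxE derive2_w //.
rewrite -[i]splitK -[j]splitK.
case: (fintype.split i) => i'; case: (fintype.split j) => j' /=.
- rewrite block_mxEul !xlast_delta_lshift !dotp_delta_lshift !mxE big_ord1 !mxE.
  rewrite /hess_lam /hess_mu eq_lshift.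
  by case: (eqVneq i' j') => [<-|_]; rewrite ?mulr1n ?mulr0n; field; rewrite !gt_eqF.
- rewrite block_mxEur (ord1 j') xlast_delta_lshift xlast_delta_ilast.
  rewrite dotp_delta_lshift !dotp_delta_ilast !mxE /hess_c.
  by field; rewrite !gt_eqF.
- rewrite block_mxEdl (ord1 i') xlast_delta_lshift xlast_delta_ilast.
  rewrite !dotp_delta_lshift dotp_delta_ilast !mxE eq_lrshift andbF mulr0n /hess_c.
  by field; rewrite !gt_eqF.
- rewrite block_mxEdr (ord1 i') (ord1 j') xlast_delta_ilast !dotp_delta_ilast !mxE eqxx mulr1n /hess_d.
  by field; rewrite !gt_eqF.
Qed.

Lemma dotp_xx (x : V) : dotp x x = 1 - rho x.
Proof. by rewrite dotpE /rho opprB addrC subrK /sqnorm; apply: eq_bigr => i _; rewrite mxE. Qed.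

Lemma geomean_gt0 (x : V) : Omega x -> 0 < geomean x.
Proof.
by move=> Ox; have /OmegaE[t0 _] := Ox; rewrite mulr_gt0 ?powR_gt0 ?rho_gt0.
Qed.

Lemma det_hessian_w (x : V) : Omega x ->
  \det (hessian w x) = alpha * (2 * beta) ^+ n * geomean x ^+ n / (xlast x ^+ 2 * rho x ^+ n).
Proof.
move=> Ox; have /OmegaE[t0 _] := Ox; have P0 := geomean_gt0 Ox.
have rho0 := rho_gt0 Ox.
have b0 := beta_gt0; have a1 : 0 < 1 - alpha by have := alpha_add_2beta; lra.
have expn (z : R) : z ^+ n = z ^+ m * z by rewrite -exprSr prednK // ltnW.
rewrite hessian_w // det_arrow_block; last 2 first.
- by rewrite gt_eqF // divr_gt0 // mulr_gt0 // mulr_gt0.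
- by rewrite gt_eqF // divr_gt0 ?exprn_gt0 // mulr_gt0 // mulr_gt0 ?alpha_gt0.
rewrite -/(dotp x x) dotp_xx /hess_lam /hess_mu /hess_c /hess_d !expn.
have -> : alpha = 1 - 2 * beta by have := alpha_add_2beta; lra.
move: (geomean x) (xlast x) (rho x) beta P0 t0 rho0 b0 => P t q b P0 t0 q0 b0.
by rewrite !expr_div_n !exprMn; field; rewrite !gt_eqF ?exprn_gt0.
Qed.

Lemma xlast_lt_geomean (x : V) : Omega x -> xlast x < geomean x.
Proof.
move=> Ox; have /OmegaE[t0 t_lt] := Ox; rewrite /geomean.
rewrite -[X in X < _](powR_alpha_sqr_beta (ltW t0)) ltr_pM2l ?powR_gt0 //.
by apply: gt0_ltr_powR; rewrite ?beta_gt0 ?nnegrE ?sqr_ge0 ?ltW ?rho_gt0.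
Qed.

Lemma geomean_pow_le (x : V) : Omega x ->
  geomean x ^+ n * powR (geomean x) p <= xlast x ^+ 2 * rho x ^+ n.
Proof.
move=> Ox; have /OmegaE[t0 _] := Ox; have P0 := geomean_gt0 Ox.
have rho0 := rho_gt0 Ox.
rewrite -(powR_mulrn n (ltW P0)) -powRD; last by rewrite gt_eqF ?implybT.
rewrite powRM ?powR_ge0 // -!powRrM.
have -> : alpha * (n%:R + p) = 2%:R by rewrite /alpha; field; rewrite gt_eqF.
rewrite (powR_mulrn 2 (ltW t0)) ler_pM2l ?exprn_gt0 // -(powR_mulrn n (ltW rho0)).
apply: ger_powR; first by rewrite rho0 rho_le1.
have := p_ge; rewrite /beta (_ : _ / _ * _ = (n%:R + p - 2) / 2); last by field; rewrite gt_eqF.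
lra.
Qed.

Lemma alpha_2beta_expn_le1 : alpha * (2 * beta) ^+ n <= 1.
Proof.
have a0 := alpha_gt0; have b0 := beta_gt0; have ab := alpha_add_2beta.
rewrite -[1]mul1r ler_pM ?exprn_ge0 ?exprn_ile1 //; lra.
Qed.

Lemma det_hessian_w_le (x : V) : Omega x -> \det (hessian w x) <= powR `|w x| (- p).
Proof.
move=> Ox; have /OmegaE[t0 _] := Ox; have P0 := geomean_gt0 Ox.
have rho0 := rho_gt0 Ox.
have tP := xlast_lt_geomean Ox.
have p0 : 0 <= p.
  by have := p_ge; have : 0 <= n%:R :> R := ler0n _ _; lra.
rewrite det_hessian_w // wfunE ltr0_norm ?subr_lt0 // opprB powRN.
apply: (@le_trans _ _ (powR (geomean x) p)^-1); last first.
  rewrite lef_pV2 ?posrE ?powR_gt0 ?subr_gt0 //.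
  by apply: ge0_ler_powR; rewrite // ?nnegrE ?lerBlDr ?lerDl ?subr_ge0 ltW.
rewrite ler_pdivrMr ?mulr_gt0 ?exprn_gt0 //.
apply: le_trans (ler_piMl (exprn_ge0 n (ltW P0)) alpha_2beta_expn_le1) _.
by rewrite mulrC ler_pdivlMr ?powR_gt0 // geomean_pow_le.
Qed.

End Barrier.

Theorem lemma2p7 (R : realType) (n : nat) (p : R)
  (hn : (2 <= n)%N) (hp : n%:R + 2 <= p) :
  exists C : R, 0 < C /\
    smooth_on (@Omega R n) (@wfun R n p C) /\
    convex_on (@Omega R n) (@wfun R n p C) /\
    (forall x, @Omega R n x ->
       \det (hessian (@wfun R n p C) x) <= powR `|@wfun R n p C x| (- p)) /\
    (forall x, (closure (@Omega R n) `\` (@Omega R n)°) x -> @wfun R n p C x = 0).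
Proof.
exists 1; split; first exact: ltr01.
split; first exact: smooth_on_w.
split; first exact: convex_on_w.
split; first by move=> x; exact: det_hessian_w_le.
by move=> x; exact: w_boundary.
Qed.
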